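(* Let $N>0$ and $\tau\in(0,1)$. Then: (i) The following are equivalent: $\beta_1^{**}(\tau)=4(N+1)$; [$\underline\beta_1(\tau)=4(N+1)$ and $\beta_2^*(\tau)=\overline\beta_2(\tau)$]; $\tau=\tau_0^{(1)}$. In particular $\beta_1^{**}(\tau)-\tau\beta_2^*(\tau)=2(N+1)$ if and only if $\tau=\tau_0^{(1)}$. (ii) The following are equivalent: $\beta_2^{**}(\tau)=4$; [$\underline\beta_2(\tau)=4$ and $\beta_1^*(\tau)=\overline\beta_1(\tau)$]; $\tau=\tau_0^{(2)}$. In particular $\beta_2^{**}(\tau)-\tau\beta_1^*(\tau)=2$ if and only if $\tau=\tau_0^{(2)}$. Moreover $0<\tau_0^{(2)}<\tau_0^{(1)}<\frac12$.
   Context: With $D=(N+1)^2+2\tau(N+1)+1$: $$\underline\beta_1(\tau)=\tfrac{2}{1-\tau^2}(N+1+\tau+\tau\sqrt D),\qquad \overline\beta_1(\tau)=\tfrac{2}{1-\tau^2}(N+1+\tau+\sqrt D),$$ $$\underline\beta_2(\tau)=\tfrac{2}{1-\tau^2}(1+\tau(N+1)+\tau\sqrt D),\qquad \overline\beta_2(\tau)=\tfrac{2}{1-\tau^2}(1+\tau(N+1)+\sqrt D);$$ $$\beta_1^*(\tau)=4(N+1)+8\tau,\quad \beta_2^*(\tau)=4+8\tau(N+1),\quad \beta_1^{**}(\tau)=2\tau\beta_2^*(\tau)=8\tau(1+2\tau(N+1)),\quad \beta_2^{**}(\tau)=2\tau\beta_1^*(\tau)=8\tau(N+1+2\tau);$$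 $$\tau_0^{(1)}=\frac{N+1}{1+\sqrt{1+4(N+1)^2}},\qquad \tau_0^{(2)}=\frac{1}{N+1+\sqrt{(N+1)^2+4}}.$$ *)

From HB Require Import structures.
From mathcomp Require Import all_boot all_order all_algebra.
From mathcomp Require Import reals.
Set Implicit Arguments. Unset Strict Implicit. Unset Printing Implicit Defensive.
Import Order.TTheory GRing.Theory Num.Theory.
Local Open Scope ring_scope.

Section Betas.
Variables (R : realType) (N : nat).
Let n1 : R := (N.+1)%:R.

Definition Dd (tau : R) : R := n1 ^+ 2 + 2 * tau * n1 + 1.

Definition beta1_low (tau : R) : R :=
  2 / (1 - tau ^+ 2) * (n1 + tau + tau * Num.sqrt (Dd tau)).
Definition beta1_up (tau : R) : R :=
  2 / (1 - tau ^+ 2) * (n1 + tau + Num.sqrt (Dd tau)).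
Definition beta2_low (tau : R) : R :=
  2 / (1 - tau ^+ 2) * (1 + tau * n1 + tau * Num.sqrt (Dd tau)).
Definition beta2_up (tau : R) : R :=
  2 / (1 - tau ^+ 2) * (1 + tau * n1 + Num.sqrt (Dd tau)).

Definition beta1_star (tau : R) : R := 4 * n1 + 8 * tau.
Definition beta2_star (tau : R) : R := 4 + 8 * tau * n1.
Definition beta1_sstar (tau : R) : R := 2 * tau * beta2_star tau.
Definition beta2_sstar (tau : R) : R := 2 * tau * beta1_star tau.

Definition tau01 : R := n1 / (1 + Num.sqrt (1 + 4 * n1 ^+ 2)).
Definition tau02 : R := 1 / (n1 + Num.sqrt (n1 ^+ 2 + 4)).
End Betas.

(* With (A, B) = (N+1, 1) for (i) and (A, B) = (1, N+1) for (ii), every beta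
   involved is the same expression in (A, B), and each condition is equivalent to
   q(tau) = 0 for q(t) = 4A t^2 + 2B t - A, whose unique positive root is the
   corresponding tau_0.  For the conditions involving sqrt D the point is that
   (2 tau sqrt D)^2 - A^2 = (A + 2B tau) q(tau), so for tau > 0 the equation
   q(tau) = 0 says exactly 2 tau sqrt D = A.  The ordering is read off the sign
   of q on either side of its root: for (A, B) = (N+1, 1), q is negative at
   tau_0^(2) when N > 0 and positive at 1/2. *)

From HB Require Import structures.
From mathcomp Require Import all_boot all_order all_algebra.
From mathcomp Require Import reals.
From mathcomp Require Import ring lra.
Set Implicit Arguments. Unset Strict Implicit. Unset Printing Implicit Defensive.
Import Order.TTheory GRing.Theory Num.Theory.
Local Open Scope ring_scope.

Lemma divr_eq_iff (F : fieldType) (x y z : F) : z != 0 -> (x / z = y <-> x = y * z).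
Proof. by move=> z_neq0; split=> [<- | ->]; rewrite ?divfK ?mulfK. Qed.

Definition quad {R : rcfType} (a b c t : R) : R := a * t ^+ 2 + 2 * b * t - c.

Definition posroot {R : rcfType} (a b c : R) : R :=
  c / (b + Num.sqrt (b ^+ 2 + a * c)).

Section PositiveRoot.
Variables (R : rcfType) (a b c : R).
Hypotheses (a_gt0 : 0 < a) (b_ge0 : 0 <= b) (c_gt0 : 0 < c).

Let r := Num.sqrt (b ^+ 2 + a * c).

Let r_sq : r ^+ 2 = b ^+ 2 + a * c.
Proof. by rewrite sqr_sqrtr // addr_ge0 ?sqr_ge0 // mulr_ge0 // ltW. Qed.

Let b_lt_r : b < r.
Proof.
have ac_gt0 : 0 < a * c by exact: mulr_gt0.
rewrite -[b]ger0_norm // -sqrtr_sqr ltr_sqrt ?ltrDl //.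
exact: ltr_wpDl (sqr_ge0 b) ac_gt0.
Qed.

Let r_gt0 : 0 < r. Proof. exact: le_lt_trans b_ge0 b_lt_r. Qed.

Lemma posroot_gt0 : 0 < posroot a b c.
Proof. by rewrite divr_gt0 // ltr_wpDl. Qed.

Lemma quad_factor (t : R) : quad a b c t = (t - posroot a b c) * (a * t + b + r).
Proof.
have a_neq0 : a != 0 by rewrite gt_eqF.
have rootE : posroot a b c = (r - b) / a.
  have br_gt0 : 0 < b + r := ltr_wpDl b_ge0 r_gt0.
  rewrite /posroot -/r; apply/eqP; rewrite eqr_div ?a_neq0 ?(gt_eqF br_gt0) //; apply/eqP.
  have -> : (r - b) * (b + r) = r ^+ 2 - b ^+ 2 by ring.
  by rewrite r_sq; ring.
rewrite rootE.
have -> : (t - (r - b) / a) * (a * t + b + r) = ((a * t + b) ^+ 2 - r ^+ 2) / a.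
  by field.
by rewrite r_sq /quad; field.
Qed.

Section NonnegativeArgument.
Variable t : R.
Hypothesis t_ge0 : 0 <= t.

Let factor_gt0 : 0 < a * t + b + r.
Proof. exact: ltr_wpDl (addr_ge0 (mulr_ge0 (ltW a_gt0) t_ge0) b_ge0) r_gt0. Qed.

Lemma quad_eq0 : quad a b c t = 0 <-> t = posroot a b c.
Proof.
rewrite quad_factor; split=> [/eqP | ->]; last by rewrite subrr mul0r.
by rewrite mulf_eq0 (gt_eqF factor_gt0) orbF subr_eq0 => /eqP.
Qed.

Lemma quad_lt0 : (quad a b c t < 0) = (t < posroot a b c).
Proof. by rewrite quad_factor pmulr_llt0 // subr_lt0. Qed.

Lemma quad_gt0 : (0 < quad a b c t) = (posroot a b c < t).
Proof. by rewrite quad_factor pmulr_lgt0 // subr_gt0. Qed.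

End NonnegativeArgument.
End PositiveRoot.

Section CriticalTau.
Variables (R : rcfType) (A B tau s : R).
Hypotheses (A_gt0 : 0 < A) (B_ge0 : 0 <= B) (tau_gt0 : 0 < tau) (tau_lt1 : tau < 1).
Hypotheses (s_ge0 : 0 <= s) (s_sq : s ^+ 2 = A ^+ 2 + 2 * tau * A * B + B ^+ 2).

Let q := quad (4 * A) B A tau.

Let k_neq0 : 1 - tau ^+ 2 != 0.
Proof. by rewrite subr_eq0 eq_sym lt_eqF // expr_lt1 // ltW. Qed.

Lemma quad_eq0_sqrt : q = 0 <-> 2 * tau * s = A.
Proof.
have key : (2 * tau * s) ^+ 2 - A ^+ 2 = (A + 2 * B * tau) * q.
  by rewrite exprMn s_sq /q /quad; ring.
have lin_neq0 : A + 2 * B * tau != 0.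
  by rewrite gt_eqF // ltr_pwDl // !mulr_ge0 // ltW.
split=> [q0 | sA].
- have u_ge0 : 0 <= 2 * tau * s by rewrite !mulr_ge0 // ltW.
  apply/eqP; rewrite -(eqrXn2 (_ : 0 < 2)%N u_ge0 (ltW A_gt0)) //.
  by rewrite -subr_eq0 key q0 mulr0.
- apply/eqP; move: key; rewrite sA subrr => /esym/eqP.
  by rewrite mulf_eq0 (negbTE lin_neq0).
Qed.

Lemma low_eq_iff :
  2 / (1 - tau ^+ 2) * (A + tau * B + tau * s) = 4 * A <-> 2 * tau * s = A - q.
Proof.
by rewrite [2 / _ * _]mulrAC divr_eq_iff // /q /quad; split=> h; lra.
Qed.

Lemma up_eq_iff :
  4 * B + 8 * tau * A = 2 / (1 - tau ^+ 2) * (B + tau * A + s) <->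
  2 * tau * s = A + (1 - 2 * tau ^+ 2) * q.
Proof.
have tau_neq0 : tau != 0 by rewrite gt_eqF.
rewrite [2 / _ * _]mulrAC /q /quad; split=> [/esym/(divr_eq_iff _ _ k_neq0) h | h].
- have := congr1 ( *%R tau) h; lra.
- apply/esym/(divr_eq_iff _ _ k_neq0)/(mulfI tau_neq0); lra.
Qed.

Lemma low_up_iff :
  (2 / (1 - tau ^+ 2) * (A + tau * B + tau * s) = 4 * A /\
   4 * B + 8 * tau * A = 2 / (1 - tau ^+ 2) * (B + tau * A + s)) <-> q = 0.
Proof.
rewrite low_eq_iff up_eq_iff; split=> [[h1 h2] | q0].
- have : (2 * (1 - tau ^+ 2)) * q = 0 by lra.
  by move/eqP; rewrite mulf_eq0 mulf_eq0 (negbTE k_neq0) pnatr_eq0 => /eqP.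
- by move/quad_eq0_sqrt: (q0) ->; rewrite q0 mulr0 subr0 addr0.
Qed.

Lemma critical_conditions :
  (2 * tau * (4 * B + 8 * tau * A) = 4 * A <->
     (2 / (1 - tau ^+ 2) * (A + tau * B + tau * s) = 4 * A /\
      4 * B + 8 * tau * A = 2 / (1 - tau ^+ 2) * (B + tau * A + s))) /\
  ((2 / (1 - tau ^+ 2) * (A + tau * B + tau * s) = 4 * A /\
    4 * B + 8 * tau * A = 2 / (1 - tau ^+ 2) * (B + tau * A + s)) <->
     tau = posroot (4 * A) B A) /\
  (2 * tau * (4 * B + 8 * tau * A) - tau * (4 * B + 8 * tau * A) = 2 * A <->
     tau = posroot (4 * A) B A).
Proof.
have four_A_gt0 : 0 < 4 * A by rewrite mulr_gt0.
have root_iff := quad_eq0 four_A_gt0 B_ge0 A_gt0 (ltW tau_gt0).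
rewrite low_up_iff -root_iff /q /quad.
by split; [|split]; split=> h; lra.
Qed.

End CriticalTau.

Section Instances.
Variables (R : realType) (N : nat).
Let m : R := (N.+1)%:R.

Let m_gt0 : 0 < m. Proof. by rewrite ltr0n. Qed.

Let sqrt_D_sq (tau : R) : 0 < tau -> Num.sqrt (Dd N tau) ^+ 2 = Dd N tau.
Proof. by move=> tau_gt0; rewrite sqr_sqrtr // /Dd !addr_ge0 ?sqr_ge0 ?mulr_ge0 ?ltW. Qed.

Lemma tau01E : tau01 R N = posroot (4 * m) 1 m.
Proof. by rewrite /tau01 /posroot expr1n expr2 mulrA. Qed.

Lemma tau02E : tau02 R N = posroot 4 m 1.
Proof. by rewrite /tau02 /posroot mulr1. Qed.

Lemma beta1_critical_conditions (tau : R) : 0 < tau < 1 ->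
  (beta1_sstar N tau = 4 * m <->
      (beta1_low N tau = 4 * m /\ beta2_star N tau = beta2_up N tau)) /\
  ((beta1_low N tau = 4 * m /\ beta2_star N tau = beta2_up N tau) <->
      tau = tau01 R N) /\
  (beta1_sstar N tau - tau * beta2_star N tau = 2 * m <-> tau = tau01 R N).
Proof.
case/andP=> tau_gt0 tau_lt1.
have s_sq : Num.sqrt (Dd N tau) ^+ 2 = m ^+ 2 + 2 * tau * m * 1 + 1 ^+ 2.
  by rewrite sqrt_D_sq // /Dd mulr1 expr1n.
have := critical_conditions m_gt0 ler01 tau_gt0 tau_lt1 (sqrtr_ge0 _) s_sq.
by rewrite /beta1_sstar /beta1_low /beta2_star /beta2_up tau01E !mulr1.
Qed.

Lemma beta2_critical_conditions (tau : R) : 0 < tau < 1 ->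
  (beta2_sstar N tau = 4 <->
      (beta2_low N tau = 4 /\ beta1_star N tau = beta1_up N tau)) /\
  ((beta2_low N tau = 4 /\ beta1_star N tau = beta1_up N tau) <->
      tau = tau02 R N) /\
  (beta2_sstar N tau - tau * beta1_star N tau = 2 <-> tau = tau02 R N).
Proof.
case/andP=> tau_gt0 tau_lt1.
have s_sq : Num.sqrt (Dd N tau) ^+ 2 = 1 ^+ 2 + 2 * tau * 1 * m + m ^+ 2.
  by rewrite sqrt_D_sq // /Dd; ring.
have := critical_conditions ltr01 (ltW m_gt0) tau_gt0 tau_lt1 (sqrtr_ge0 _) s_sq.
by rewrite /beta2_sstar /beta2_low /beta1_star /beta1_up tau02E !mulr1.
Qed.

Lemma tau0_bounds : (0 < N)%N ->
  0 < tau02 R N /\ tau02 R N < tau01 R N /\ tau01 R N < 1 / 2.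
Proof.
move=> N_gt0; have m_gt1 : 1 < m by rewrite ltr1n ltnS.
have four_gt0 : 0 < 4 :> R by rewrite ltr0n.
have four_m_gt0 : 0 < 4 * m by rewrite mulr_gt0.
have t2_gt0 : 0 < posroot 4 m 1 := posroot_gt0 four_gt0 (ltW m_gt0) ltr01.
rewrite tau01E tau02E; split=> //; split.
- set t2 := posroot 4 m 1.
  have t2_root : quad 4 m 1 t2 = 0 by apply/(quad_eq0 four_gt0 (ltW m_gt0) ltr01 (ltW t2_gt0)).
  rewrite -(quad_lt0 four_m_gt0 ler01 m_gt0 (ltW t2_gt0)).
  have -> : quad (4 * m) 1 m t2 = m * quad 4 m 1 t2 - 2 * t2 * (m ^+ 2 - 1).
    by rewrite /quad; ring.
  have m_sq_gt1 : 0 < m ^+ 2 - 1 by rewrite subr_gt0 exprn_egt1.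
  by rewrite t2_root mulr0 sub0r oppr_lt0 mulr_gt0 // mulr_gt0.
- have half_ge0 : 0 <= 1 / 2 :> R by rewrite divr_ge0 ?ler0n.
  rewrite -(quad_gt0 four_m_gt0 ler01 m_gt0 half_ge0).
  have -> : quad (4 * m) 1 m (1 / 2) = 1 by rewrite /quad; field.
  exact: ltr01.
Qed.

End Instances.

Theorem mainTheorem12 (R : realType) (N : nat) (tau : R) :
  (0 < N)%N -> 0 < tau < 1 ->
  (* (i) *)
  ((beta1_sstar N tau = 4 * (N.+1)%:R <->
      (beta1_low N tau = 4 * (N.+1)%:R /\ beta2_star N tau = beta2_up N tau)) /\
   ((beta1_low N tau = 4 * (N.+1)%:R /\ beta2_star N tau = beta2_up N tau) <->
      tau = tau01 R N) /\
   (beta1_sstar N tau - tau * beta2_star N tau = 2 * (N.+1)%:R <-> tau = tau01 R N)) /\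
  (* (ii) *)
  ((beta2_sstar N tau = 4 <->
      (beta2_low N tau = 4 /\ beta1_star N tau = beta1_up N tau)) /\
   ((beta2_low N tau = 4 /\ beta1_star N tau = beta1_up N tau) <->
      tau = tau02 R N) /\
   (beta2_sstar N tau - tau * beta1_star N tau = 2 <-> tau = tau02 R N)) /\
  (* moreover *)
  (0 < tau02 R N /\ tau02 R N < tau01 R N /\ tau01 R N < 1 / 2).
Proof.
move=> N_gt0 tau_range.
split; first exact: beta1_critical_conditions.
split; first exact: beta2_critical_conditions.
exact: tau0_bounds.
Qed.
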